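(* In the setting described in the context, assume the adjacency graph of the mesh (vertices $i$, edges the interior faces $i|j$) is connected and that at least one face of the mesh lies in $\Gamma_D$. Let $c^{l,n}\in\mathbb R^N$ satisfy $\min_ic^{l,n}_i>0$ for $l=1,\dots,M$, and let $T^n\in\mathbb R^N$ be arbitrary. Then for every $\Delta t>0$ there exists a unique $(c^{1,n+1},\dots,c^{M,n+1},\psi^{n+1})$ with $c^{l,n+1}_i>0$ for all $i,l$ satisfying equations (i) and (ii) of Scheme I. If moreover $T^n_i>0$ for all $i$ and $\Delta t<C_T/C_*$, where $C_*:=\max_i|P^{n+1}_i|$ (with $P^{n+1}$ computed from this $c^{l,n+1},\psi^{n+1}$), then equation (iii) of Scheme I has a unique solution $T^{n+1}$, and $T^{n+1}_i>0$ for $i=1,\dots,N$.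
   Context: Mesh. $\Omega\subset\mathbb R^d$ is a bounded polygonal/polyhedral domain with $\partial\Omega=\Gamma_D\cup\Gamma_N$, $\Gamma_D\cap\Gamma_N=\emptyset$. A Voronoi finite-volume mesh consists of points $\mathbf x_1,\dots,\mathbf x_N$ and control volumes $V_i=\{\mathbf y\in\Omega:|\mathbf y-\mathbf x_i|<|\mathbf y-\mathbf x_j|\ \forall j\ne i\}$. An interior face is $\sigma=\partial V_i\cap\partial V_j$ of positive $(d-1)$-measure, written $\sigma=i|j$; $\mathcal E_{int}$ is the set of interior faces and $\mathcal E_{i,int}$ those of $V_i$; $\mathcal E^D_{i,ext}$, $\mathcal E^N_{i,ext}$ are the faces of $\partial V_i$ lying in $\Gamma_D$, resp. $\Gamma_N$. $\mathrm m(\cdot)$ is Lebesgue measure (in dimension $d$ or $d-1$); $d_\sigma=|\mathbf x_i-\mathbf x_j|$ for $\sigma=i|j$ and $d_\sigma=\mathrm{dist}(\mathbf x_i,\sigma)$ for exterior faces of $V_i$; $\tau_\sigma=\mathrm m(\sigma)/d_\sigma$. Grid functions are vectors $u=(u_1,\dots,u_N)\in\mathbb R^N$; for $\sigma=i|j$, $Du_{i,\sigma}=u_j-u_i$. For positive $u$ and $\sigma=i|j$, $\mathcal A_\sigma u=\frac{(\mathrm m(V_i)+\mathrm m(V_j))u_iu_j}{\mathrm m(V_i)u_j+\mathrm m(V_j)u_i}$ (harmonic average). The discrete inner product is $(f,g)=\sum_{i=1}^N\mathrm m(V_i)f_ig_i$. Scheme I. Parameters: $\varepsilon>0$, $k>0$,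 $C_T>0$, $\Delta t>0$, $\nu^l>0$, $z^l\in\mathbb R$ ($l=1,\dots,M$), a grid function $\rho^f$, Dirichlet data $\psi^D_\sigma$ on $\Gamma_D$-faces and Neumann data $g_\sigma$ on $\Gamma_N$-faces. Given $c^{l,n}$ (positive), $T^n$, the unknowns $c^{l,n+1}$ (positive), $\psi^{n+1}$, $T^{n+1}$ satisfy, for $i=1,\dots,N$: (i) $\frac{c^{l,n+1}_i-c^{l,n}_i}{\Delta t}+\frac{\varepsilon}{\mathrm m(V_i)}\sum_{\sigma\in\mathcal E_{i,int}}\mathrm m(\sigma)F^l_{i,\sigma}=0$, where for $\sigma=i|j$ \[F^l_{i,\sigma}=-\frac{1}{\nu^l d_\sigma}\Big[\mathcal A_\sigma(c^{l,n})\,D\big(\log c^{l,n+1}+z^l\psi^{n+1}\big)_{i,\sigma}+D\big(c^{l,n}(T^n-1)\big)_{i,\sigma}\Big]\] (so $F^l_{j,\sigma}=-F^l_{i,\sigma}$), and the flux through exterior faces is zero (zero-flux boundary condition); (ii) $-\frac{\varepsilon^2}{\mathrm m(V_i)}\Big[\sum_{\sigma\in\mathcal E_{i,int}}\tau_\sigma D\psi^{n+1}_{i,\sigma}+\sum_{\sigma\in\mathcal E^D_{i,ext}}\tau_\sigma(\psi^D_\sigma-\psi^{n+1}_i)\Big]-\frac{1}{\mathrm m(V_i)}\sum_{\sigma\in\mathcal E^N_{i,ext}}\mathrm m(\sigma)g_\sigma=\sum_{l=1}^Mz^lc^{l,n+1}_i+\rho^f_i$; (iii) $C_T\frac{T^{n+1}_i-T^n_i}{\Delta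 t}=\frac{k}{\mathrm m(V_i)}\sum_{\sigma\in\mathcal E_{i,int}}\tau_\sigma DT^{n+1}_{i,\sigma}+T^{n+1}_iP^{n+1}_i+\varepsilon\sum_{l=1}^M\nu^lc^{l,n+1}_i|\hat{\mathbf u}^{l,n+1}_i|^2$ (thermally insulated boundary: no exterior-face terms), where \[P^{n+1}_i=\sum_{l=1}^M\Big[\frac{\varepsilon}{\mathrm m(V_i)}\sum_{\sigma\in\mathcal E_{i,int}}\mathrm m(\sigma)F^l_{i,\sigma}\lambda^l_\sigma+(1+\log c^{l,n+1}_i)\frac{c^{l,n+1}_i-c^{l,n}_i}{\Delta t}\Big],\] $\lambda^l_\sigma$ is a face value of $\log c^{l,n+1}$ depending only on $\sigma$ (the same from both sides), and $\hat{\mathbf u}^{l,n+1}_i\in\mathbb R^d$ are given cell-wise velocity reconstructions computed from $c^{l,n+1},\psi^{n+1},T^n$. *)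

From HB Require Import structures.
From mathcomp Require Import all_boot all_order all_algebra.
From mathcomp Require Import reals exp.
Set Implicit Arguments. Unset Strict Implicit. Unset Printing Implicit Defensive.
Import Order.TTheory GRing.Theory Num.Theory.
Local Open Scope ring_scope.

(*   fm i j       = m(sigma) for the interior face sigma = i|j               *)
(*                  (0 when V_i and V_j share no face of positive measure)   *)
(*   fd i j       = d_sigma = |x_i - x_j| for sigma = i|j                    *)
(*   dirF i       = list of Dirichlet exterior faces of V_i, each given as   *)
(*                  (m(sigma), d_sigma, psi^D_sigma)                         *)
(*   neuF i       = list of Neumann exterior faces of V_i, each given as     *)
(*                  (m(sigma), g_sigma)                                      *)
Record mesh (R : realType) (N : nat) := Mesh {
  vol  : 'I_N -> R;
  fm   : 'I_N -> 'I_N -> R;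
  fd   : 'I_N -> 'I_N -> R;
  dirF : 'I_N -> seq (R * R * R);
  neuF : 'I_N -> seq (R * R)
}.

Section Scheme.
Variables (R : realType) (N : nat).
Implicit Types (T : mesh R N).

Definition adj T : rel 'I_N := fun i j => 0 < fm T i j.

Definition mesh_ok T : Prop :=
  (forall i, 0 < vol T i) /\
  (forall i j, fm T i j = fm T j i /\ fd T i j = fd T j i) /\
  (forall i j, 0 <= fm T i j) /\
  (forall i, fm T i i = 0) /\
  (forall i j, adj T i j -> 0 < fd T i j) /\
  (forall i s, s \in dirF T i -> 0 < s.1.1 /\ 0 < s.1.2) /\
  (forall i s, s \in neuF T i -> 0 < s.1).

Definition mesh_connected T : Prop := forall i j, connect (adj T) i j.

Definition has_dirichlet_face T : Prop := exists i, dirF T i != [::].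

Definition tau T (i j : 'I_N) : R := fm T i j / fd T i j.

Definition harm T (u : 'I_N -> R) (i j : 'I_N) : R :=
  (vol T i + vol T j) * u i * u j / (vol T i * u j + vol T j * u i).

Definition Dd (u : 'I_N -> R) (i j : 'I_N) : R := u j - u i.

(* Flux F^l_{i,sigma}, sigma = i|j, for species with parameters nu, zl;
   cn = c^{l,n}, cnp = c^{l,n+1}, psi = psi^{n+1}, Tn = T^n *)
Definition flux T (nu zl : R) (cn cnp psi Tn : 'I_N -> R) (i j : 'I_N) : R :=
  - (1 / (nu * fd T i j)) *
    (harm T cn i j * Dd (fun k => ln (cnp k) + zl * psi k) i j
     + Dd (fun k => cn k * (Tn k - 1)) i j).

Variable M : nat.

Definition eq_i T (eps dt : R) (nu z : 'I_M -> R)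
    (cn cnp : 'I_M -> 'I_N -> R) (psi Tn : 'I_N -> R) : Prop :=
  forall (l : 'I_M) (i : 'I_N),
    (cnp l i - cn l i) / dt
    + eps / vol T i * (\sum_(j | adj T i j)
                         fm T i j * flux T (nu l) (z l) (cn l) (cnp l) psi Tn i j)
    = 0.

Definition eq_ii T (eps : R) (z : 'I_M -> R) (rhof : 'I_N -> R)
    (cnp : 'I_M -> 'I_N -> R) (psi : 'I_N -> R) : Prop :=
  forall i : 'I_N,
    - (eps ^+ 2 / vol T i) *
      ((\sum_(j | adj T i j) tau T i j * Dd psi i j)
       + \sum_(s <- dirF T i) (s.1.1 / s.1.2) * (s.2 - psi i))
    - 1 / vol T i * (\sum_(s <- neuF T i) s.1 * s.2)
    = \sum_(l < M) z l * cnp l i + rhof i.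

(* P^{n+1}_i; lam l i j = lambda^l_sigma for sigma = i|j *)
Definition Pn T (eps dt : R) (nu z : 'I_M -> R)
    (cn cnp : 'I_M -> 'I_N -> R) (psi Tn : 'I_N -> R)
    (lam : 'I_M -> 'I_N -> 'I_N -> R) (i : 'I_N) : R :=
  \sum_(l < M)
    (eps / vol T i * (\sum_(j | adj T i j)
        fm T i j * flux T (nu l) (z l) (cn l) (cnp l) psi Tn i j * lam l i j)
     + (1 + ln (cnp l i)) * ((cnp l i - cn l i) / dt)).

Definition sqnorm (d : nat) (u : 'rV[R]_d) : R := \sum_(k < d) u 0 k ^+ 2.

Definition eq_iii T (eps dt k CT : R) (nu z : 'I_M -> R)
    (cn cnp : 'I_M -> 'I_N -> R) (psi Tn : 'I_N -> R)
    (lam : 'I_M -> 'I_N -> 'I_N -> R) (d : nat) (uh : 'I_M -> 'I_N -> 'rV[R]_d)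
    (Tnp : 'I_N -> R) : Prop :=
  forall i : 'I_N,
    CT * ((Tnp i - Tn i) / dt)
    = k / vol T i * (\sum_(j | adj T i j) tau T i j * Dd Tnp i j)
      + Tnp i * Pn T eps dt nu z cn cnp psi Tn lam i
      + eps * (\sum_(l < M) nu l * cnp l i * sqnorm (uh l i)).

End Scheme.

(* Writing [c = exp (mu - z psi)] with the electrochemical potentials [mu],
   equations (i) and (ii) become, up to positive factors, the Euler-Lagrange
   equations of a convex energy of [(mu, psi)]: exponential entropy terms,
   Dirichlet energies weighted by the harmonic averages and by [tau], and a
   Dirichlet-boundary term, plus linear terms.  Connectedness of the mesh and
   the Dirichlet face give discrete Poincare inequalities, so the energy is
   coercive; a minimiser exists on a compact box and is a critical point.
   For uniqueness, testing the difference of two solutions with the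
   difference of their potentials yields a sum of nonnegative terms
   [(c - c') (ln c - ln c')] and Dirichlet energies of [psi - psi'], which all
   vanish.  Equation (iii) is linear in [T^(n+1)]; when [dt C_* < C_T] its
   diagonal is positive and the discrete minimum principle gives
   injectivity, hence solvability, and positivity of [T^(n+1)]. *)

From HB Require Import structures.
From mathcomp Require Import all_boot all_order all_algebra.
From mathcomp Require Import reals exp.
From mathcomp Require Import all_classical all_reals all_analysis.
From mathcomp Require Import ring lra.
Import Order.TTheory GRing.Theory Num.Theory.
Import numFieldTopology.Exports numFieldNormedType.Exports.
Local Open Scope classical_set_scope.
Local Open Scope ring_scope.
Set Implicit Arguments. Unset Strict Implicit. Unset Printing Implicit Defensive.

(** * Minimisers of sums of ridge functions *)

Definition lform (R : realType) n (a : 'I_n -> R) (x : 'rV[R]_n) : R :=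
  \sum_(k < n) a k * x ord0 k.

Definition ridge_sum (R : realType) (P : finType) n (F : P -> R -> R)
    (al : P -> 'I_n -> R) (x : 'rV[R]_n) : R :=
  \sum_p F p (lform (al p) x).

Lemma continuous_sum (R : realType) (T : topologicalType) (I : finType)
    (f : I -> T -> R) :
  (forall i, continuous (f i)) -> continuous (fun x => \sum_i f i x).
Proof.
move=> fC; have -> : (fun x => \sum_i f i x) = \sum_i f i by rewrite fct_sumE.
elim/big_ind: _ => // [x|g h gC hC x]; first exact: cst_continuous.
exact: continuousD (gC x) (hC x).
Qed.

Lemma continuous_lform (R : realType) n (a : 'I_n -> R) : continuous (lform a).
Proof.
apply: (@continuous_sum _ _ _ (fun k (x : 'rV[R]_n) => a k * x ord0 k)) => k x.
apply: (@continuousM _ _ (fun=> a k) (fun x : 'rV[R]_n => x ord0 k)).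
  exact: cst_continuous.
exact: coord_continuous.
Qed.

Lemma continuous_ridge_sum (R : realType) (P : finType) n (F : P -> R -> R)
    (al : P -> 'I_n -> R) :
  (forall p, continuous (F p)) -> continuous (ridge_sum F al).
Proof.
move=> FC; apply: (@continuous_sum _ _ _ (fun p x => F p (lform (al p) x))) => p x.
apply: (@continuous_comp _ _ _ (lform (al p)) (F p)); last exact: FC.
exact: continuous_lform.
Qed.

Lemma ler_sum_term (R : realFieldType) (I : finType) (f : I -> R) i :
  (forall j, 0 <= f j) -> f i <= \sum_j f j.
Proof. by move=> f0; rewrite (bigD1 i) //= lerDl sumr_ge0. Qed.

Lemma ler_sum2_term (R : realFieldType) (I J : finType) (f : I -> J -> R) a b :
  (forall i j, 0 <= f i j) -> f a b <= \sum_i \sum_j f i j.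
Proof.
move=> f0; apply: le_trans (ler_sum_term b (f0 a)) _.
by apply: (@ler_sum_term _ _ (fun i => \sum_j f i j)) => i; exact: sumr_ge0.
Qed.

(* A minimiser exists as soon as every coordinate is bounded on the sublevel
   set of the origin: minimise over a box, which is compact. *)
Lemma ridge_sum_has_min (R : realType) (P : finType) n (F : P -> R -> R)
    (al : P -> 'I_n -> R) :
  (forall p, continuous (F p)) ->
  (forall k, exists B, forall x, ridge_sum F al x <= ridge_sum F al 0 ->
     `|x ord0 k| <= B) ->
  exists x, forall y, ridge_sum F al x <= ridge_sum F al y.
Proof.
move=> FC /fin_all_exists [B HB].
set Bm := \sum_k `|B k| + 1.
have Bm0 : 0 <= Bm by rewrite addr_ge0 // sumr_ge0.
set A := [set v : 'rV[R]_n | forall i, `[- Bm, Bm]%classic (v ord0 i)].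
have A0 : A 0 by move=> i /=; rewrite mxE in_itv /= -ler_norml normr0.
have cA : compact A.
  by apply: (@rV_compact _ _ (fun=> `[- Bm, Bm]%classic)) => i; exact: segment_compact.
have cP : {within A, continuous (ridge_sum F al)}.
  by apply: continuous_subspaceT; exact: continuous_ridge_sum.
have [x _ xmin] := EVT_min_rV (ex_intro _ 0 A0) cA cP.
exists x => y; have [y0|y0] := leP (ridge_sum F al y) (ridge_sum F al 0).
  apply: xmin; rewrite in_setE => i /=; rewrite in_itv /= -ler_norml.
  apply: le_trans (HB i y y0) _; apply: le_trans (ler_norm _) _.
  rewrite (le_trans (ler_sum_term i (fun j => normr_ge0 (B j)))) //.
  by rewrite lerDl.
by apply: le_trans (ltW y0); apply: xmin; rewrite in_setE.
Qed.

Lemma lform_shift (R : realType) n (a : 'I_n -> R) (x : 'rV[R]_n) k t :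
  lform a (x + t *: delta_mx 0 k) = lform a x + t * a k.
Proof.
have E j : a j * (x + t *: delta_mx 0 k) ord0 j
    = a j * x ord0 j + (if j == k then t * a k else 0).
  rewrite !mxE /=; case: eqP => [->|_] /=.
    by rewrite mulr1n mulr1 mulrDr [t * _]mulrC.
  by rewrite mulr0n mulr0 !addr0.
rewrite /lform (eq_bigr _ (fun j _ => E j)) big_split /=.
by rewrite -big_mkcond /= big_pred1_eq.
Qed.

Lemma is_derive_affine (R : realType) (u a t : R) :
  is_derive t (1 : R) (fun s : R => u + s * a) a.
Proof.
have D := is_deriveD (is_derive_cst u t 1)
  (is_deriveM (@is_derive_id R R^o t 1) (is_derive_cst a t 1)).
apply: (is_derive_eq D).
by rewrite /= scaler0 add0r /GRing.scale /= mulr1 add0r.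
Qed.

(* Fermat's rule along the coordinate direction [k]. *)
Lemma ridge_sum_stationary (R : realType) (P : finType) n (F dF : P -> R -> R)
    (al : P -> 'I_n -> R) (x : 'rV[R]_n) :
  (forall p (u : R), is_derive u (1 : R) (F p) (dF p u)) ->
  (forall y, ridge_sum F al x <= ridge_sum F al y) ->
  forall k, \sum_p dF p (lform (al p) x) * al p k = 0.
Proof.
move=> FD xmin k.
set f := fun t : R => ridge_sum F al (x + t *: delta_mx 0 k).
have fD (t : R) :
    is_derive t (1 : R) f (\sum_p dF p (lform (al p) x + t * al p k) * al p k).
  have -> : f = \sum_p (fun s => F p (lform (al p) x + s * al p k)).
    rewrite fct_sumE; apply: funext => s.
    by apply: eq_bigr => p _; rewrite lform_shift.
  elim/big_ind2: _ => [|g1 d1 g2 d2 g1D g2D|p _].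
  - exact: is_derive_cst.
  - exact: is_deriveD.
  - exact: is_derive1_comp (FD _ _) (is_derive_affine _ _ _).
have f'0 : is_derive (0 : R) 1 f 0.
  apply: (@derive1_at_min _ f (-1) 1 0).
  - by rewrite (@le_trans _ _ 0) // ?lerN10.
  - by move=> t _; exact: (@ex_derive _ _ _ _ _ _ _ (fD t)).
  - by rewrite in_itv /= ltrN10 ltr01.
  - by move=> t _; rewrite /f scale0r addr0; exact: xmin.
have := fD 0; under eq_bigr do rewrite mul0r addr0.
by move=> fD0; rewrite -(derive_val (is_derive := fD0)) (derive_val (is_derive := f'0)).
Qed.

Definition expquad (R : realType) (A B C u : R) : R :=
  A * expR u + B * (u * u) + C * u.

Definition dexpquad (R : realType) (A B C u : R) : R := A * expR u + 2 * B * u + C.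

Lemma is_derive_expquad (R : realType) (A B C u : R) :
  is_derive u (1 : R) (expquad A B C) (dexpquad A B C u).
Proof.
have D := is_deriveD (is_deriveD (is_deriveM (is_derive_cst A u 1) (is_derive_expR u))
  (is_deriveM (is_derive_cst B u 1)
     (is_deriveM (@is_derive_id R R^o u 1) (@is_derive_id R R^o u 1))))
  (is_deriveM (is_derive_cst C u 1) (@is_derive_id R R^o u 1)).
apply: (is_derive_eq D); rewrite /dexpquad /= /GRing.scale /= !mulr0 !addr0 !mulr1; ring.
Qed.

Lemma continuous_expquad (R : realType) (A B C : R) : continuous (expquad A B C).
Proof.
move=> u; apply: differentiable_continuous; apply/derivable1_diffP.
exact: (@ex_derive _ _ _ _ _ _ _ (is_derive_expquad A B C u)).
Qed.

Lemma expquad_ridge_critical_point (R : realType) (P : finType) n (A B C : P -> R)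
    (al : P -> 'I_n -> R) :
  let Phi := ridge_sum (fun p => expquad (A p) (B p) (C p)) al in
  (forall k, exists Bd, forall x, Phi x <= Phi 0 -> `|x ord0 k| <= Bd) ->
  exists x, forall k,
    \sum_p dexpquad (A p) (B p) (C p) (lform (al p) x) * al p k = 0.
Proof.
move=> Phi bounded.
have [x xmin] := @ridge_sum_has_min _ _ _ _ al
  (fun p => @continuous_expquad R (A p) (B p) (C p)) bounded.
exists x; exact: ridge_sum_stationary
  (fun p => @is_derive_expquad R (A p) (B p) (C p)) xmin.
Qed.

(** * Finite sums, elementary inequalities, discrete Poincare inequalities *)

Lemma sqrD_le (R : realFieldType) (u v : R) : (u + v) ^+ 2 <= 2 * u ^+ 2 + 2 * v ^+ 2.
Proof. by have := sqr_ge0 (u - v); rewrite sqrrB sqrrD; lra. Qed.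

Lemma normr_le1Dsqr (R : realFieldType) (a : R) : `|a| <= 1 + a ^+ 2.
Proof.
rewrite -(real_normK (num_real a)).
by have := sqr_ge0 (`|a| - 1); rewrite sqrrB; nra.
Qed.

(* A linear lower bound of [expR y - c y] in [|y|]: the exponential beats the
   linear term on the right, the linear term alone does on the left. *)
Lemma expR_subMl_ge (R : realType) (c y : R) : 0 < c ->
  c / (c + 1) * `|y| - (c + 1) ^+ 2 / 2 <= expR y - c * y.
Proof.
move=> c0.
have c1 : 0 < c + 1 by lra.
have m1 : c / (c + 1) <= 1 by rewrite ler_pdivrMr // mul1r; lra.
have m2 : c / (c + 1) <= c by rewrite ler_pdivrMr // ler_peMr //; lra.
have m0 : 0 <= c / (c + 1) by rewrite divr_ge0 // ltW.
have K0 : 0 <= (c + 1) ^+ 2 / 2 by rewrite divr_ge0 // sqr_ge0.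
have [y0|y0] := leP 0 y.
  rewrite ger0_norm //.
  have H : 1 + y ^+ 2 / 2 <= expR y by exact: (@expR_ge1Dxn R y 1 y0).
  have H2 : 0 <= (y - (c + 1)) ^+ 2 / 2 by rewrite divr_ge0 // sqr_ge0.
  have H3 : c / (c + 1) * y <= y by rewrite ler_piMl.
  have H4 : 0 <= (y - (c + 1)) ^+ 2 by exact: sqr_ge0.
  rewrite sqrrB in H4; nra.
rewrite ltr0_norm //.
have e0 := expR_gt0 y.
have H5 : c / (c + 1) * - y <= c * - y by rewrite ler_pM2r // oppr_gt0.
lra.
Qed.

Lemma ler_term_of_sum (R : realFieldType) (I : finType) (f g : I -> R) (B : R) i0 :
  \sum_i f i <= B -> (forall i, g i <= f i) -> f i0 <= B + \sum_i `|g i|.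
Proof.
move=> fB gf; move: fB; rewrite (bigD1 i0) //= => fB.
have : - \sum_(i | i != i0) `|g i| <= \sum_(i | i != i0) f i.
  rewrite -sumrN; apply: ler_sum => i _.
  by apply: le_trans (gf i); rewrite lerNl -normrN ler_norm.
have : \sum_(i | i != i0) `|g i| <= \sum_i `|g i|.
  by rewrite [X in _ <= X](bigD1 i0) //= lerDr.
lra.
Qed.

Lemma sum_antisym (R : realFieldType) (I : finType) (w : I -> I -> R) (g : I -> R) :
  (forall i j, w i j = w j i) -> \sum_i \sum_j w i j * (g j - g i) = 0.
Proof.
move=> wC; set S := \sum_i _.
suff : S = - S by lra.
rewrite {1}/S exchange_big /= /S -sumrN; apply: eq_bigr => i _.
by rewrite -sumrN; apply: eq_bigr => j _; rewrite wC; ring.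
Qed.

Lemma sum_sym_by_parts (R : realFieldType) (I : finType) (w : I -> I -> R) (y : I -> R) :
  (forall i j, w i j = w j i) ->
  \sum_i \sum_j w i j * (y j - y i) * y i
  = - (\sum_i \sum_j w i j * (y j - y i) ^+ 2) / 2.
Proof.
move=> wC; set S := \sum_i _.
have E : S = - \sum_i \sum_j w i j * (y j - y i) * y j.
  rewrite /S exchange_big /= -sumrN; apply: eq_bigr => i _.
  by rewrite -sumrN; apply: eq_bigr => j _; rewrite wC; ring.
have F : S + S = - \sum_i \sum_j w i j * (y j - y i) ^+ 2.
  rewrite {2}E /S -sumrB -sumrN; apply: eq_bigr => i _.
  by rewrite -sumrB -sumrN; apply: eq_bigr => j _; ring.
lra.
Qed.

(* Young's inequality [|b d| <= Q/n + b^2 n P / 4] summed over the [n - 1]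
   indices, with [n = #|I| + 1]. *)
Lemma young_absorb (R : realFieldType) (I : finType) (b P : I -> R) :
  (forall i, 0 < P i) ->
  exists C, forall (d : I -> R) (Q : R), 0 <= Q ->
    (forall i, d i ^+ 2 <= P i * Q) -> \sum_i `|b i * d i| <= Q + C.
Proof.
move=> P0; set n : R := #|I|%:R + 1.
have n0 : 0 < n by rewrite /n ltr_pwDr // ler0n.
exists (\sum_i b i ^+ 2 * (n * P i) / 4) => d Q Q0 dQ.
have term i : `|b i * d i| <= Q / n + b i ^+ 2 * (n * P i) / 4.
  set s := n * P i; have s0 : 0 < s by rewrite mulr_gt0.
  set a := `|b i|; set u := `|d i|.
  have u0 : 0 <= u by exact: normr_ge0.
  have hu : u ^+ 2 = d i ^+ 2 by rewrite /u real_normK // num_real.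
  have ha : a ^+ 2 = b i ^+ 2 by rewrite /a real_normK // num_real.
  rewrite normrM -/a -/u -ha.
  have h1 : a * u * s <= u ^+ 2 + a ^+ 2 * s ^+ 2 / 4.
    by have := sqr_ge0 (u - a * s / 2); rewrite sqrrB; nra.
  have h2 : a * u <= (u ^+ 2 + a ^+ 2 * s ^+ 2 / 4) / s by rewrite ler_pdivlMr.
  have h3 : (u ^+ 2 + a ^+ 2 * s ^+ 2 / 4) / s = u ^+ 2 / s + a ^+ 2 * s / 4.
    by field; rewrite gt_eqF.
  have h4 : u ^+ 2 / s <= Q / n.
    rewrite ler_pdivrMr // hu.
    have -> : Q / n * s = P i * Q by rewrite /s; field; rewrite gt_eqF.
    exact: dQ.
  lra.
apply: le_trans (ler_sum _ (fun i _ => term i)) _.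
rewrite big_split /= sumr_const lerD2r -mulr_natr.
have k0 : (#|xpredT : pred I|%:R : R) <= n by rewrite /n cardT lerDl.
by rewrite mulrAC ler_pdivrMr //; nra.
Qed.

Lemma path_sqr_bound (R : realFieldType) (I : finType) (e : rel I) (y : I -> R) (S : R) :
  0 <= S -> (forall a b, e a b -> (y b - y a) ^+ 2 <= S) ->
  forall p a, path e a p -> (y (last a p) - y a) ^+ 2 <= 4 ^+ size p * S.
Proof.
move=> S0 eS; elim=> [|b p IH] a /=; first by rewrite subrr expr0n /= mul1r.
move=> /andP [eab pb].
have h1 := IH b pb; have h2 := eS a b eab.
have -> : y (last b p) - y a = (y (last b p) - y b) + (y b - y a) by ring.
apply: le_trans (sqrD_le _ _) _.
have h3 : 1 <= (4 : R) ^+ size p by apply: exprn_ege1; rewrite ler1n.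
have h5 : S <= (4 : R) ^+ size p * S by rewrite ler_peMl.
rewrite (exprS (4 : R) (size p)) -mulrA; lra.
Qed.

(* Along a path from [i0] to [i], each squared increment is bounded by the
   whole weighted energy divided by the weight of its edge. *)
Lemma discrete_poincare (R : realFieldType) (I : finType) (e : rel I) (W : I -> I -> R) :
  (forall a b, 0 <= W a b) -> (forall a b, e a b -> 0 < W a b) ->
  forall i0 i, connect e i0 i ->
  exists P, 0 < P /\ forall y : I -> R,
    (y i - y i0) ^+ 2 <= P * \sum_a \sum_b W a b * (y b - y a) ^+ 2.
Proof.
move=> W0 We i0 i /connectP [p pth ->].
set Winv := \sum_a \sum_b (if e a b then 1 / W a b else 0).
have Winv0 a b : 0 <= if e a b then 1 / W a b else 0.
  by case: ifP => // /We h; rewrite divr_ge0 // ltW.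
have Wi0 : 0 <= Winv by apply: sumr_ge0 => a _; exact: sumr_ge0.
exists (4 ^+ size p * Winv + 1); split; first by rewrite ltr_pwDr // mulr_ge0.
move=> y; set Q := \sum_a _.
have Q0 : 0 <= Q.
  by apply: sumr_ge0 => a _; apply: sumr_ge0 => b _; rewrite mulr_ge0 ?sqr_ge0.
have edge a b : e a b -> (y b - y a) ^+ 2 <= Winv * Q.
  move=> eab; have w0 := We a b eab.
  have h1 : W a b * (y b - y a) ^+ 2 <= Q.
    by apply: (@ler_sum2_term _ _ _ (fun a b => W a b * (y b - y a) ^+ 2)) => c d;
      rewrite mulr_ge0 ?sqr_ge0.
  have h2 : 1 / W a b <= Winv.
    by have := ler_sum2_term a b Winv0; rewrite eab.
  have h3 : (y b - y a) ^+ 2 <= 1 / W a b * Q by rewrite mul1r ler_pdivlMl // mulrC.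
  exact: le_trans h3 (ler_wpM2r Q0 h2).
apply: le_trans (path_sqr_bound (mulr_ge0 Wi0 Q0) edge pth) _.
by rewrite mulrDl mul1r mulrA lerDl.
Qed.

Lemma connect_eq_const (V : Type) (I : finType) (e : rel I) (f : I -> V) :
  (forall a b, e a b -> f b = f a) -> forall a b, connect e a b -> f b = f a.
Proof.
move=> fe a b /connectP [p pth ->] {b}.
elim: p a pth => [|c p IH] a //= /andP [eac pc].
by rewrite (IH c pc) (fe a c eac).
Qed.

Lemma subr_ln_mul_ge0 (R : realType) (a b : R) : 0 < a -> 0 < b ->
  0 <= (a - b) * (ln a - ln b).
Proof.
move=> a0 b0; have pa : a \in Num.pos by rewrite posrE.
have pb : b \in Num.pos by rewrite posrE.
case: (ltgtP a b) => h; last by rewrite h subrr mul0r.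
- have : ln a < ln b by rewrite ltr_ln.
  nra.
- have : ln b < ln a by rewrite ltr_ln.
  nra.
Qed.

Lemma subr_ln_mul_eq0 (R : realType) (a b : R) : 0 < a -> 0 < b ->
  (a - b) * (ln a - ln b) = 0 -> a = b.
Proof.
move=> a0 b0 /eqP; rewrite mulf_eq0 !subr_eq0 => /orP [/eqP //|/eqP].
by apply: ln_inj; rewrite posrE.
Qed.

Lemma sum_mul_delta (R : pzRingType) (I : finType) (f : I -> R) a :
  \sum_i f i * (a == i)%:R = f a.
Proof.
rewrite (bigD1 a) //= eqxx mulr1 big1 ?addr0 // => i /negbTE.
by rewrite eq_sym => ->; rewrite mulr0.
Qed.

Lemma sum_pair (R : pzRingType) (I J : finType) (G : I * J -> R) :
  \sum_p G p = \sum_i \sum_j G (i, j).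
Proof. by rewrite pair_big; apply: eq_bigr => -[]. Qed.

Lemma sum_pair_delta1 (R : pzRingType) (I J : finType) (h : I * J -> R) a :
  \sum_q h q * (a == q.1)%:R = \sum_j h (a, j).
Proof.
by rewrite sum_pair; under eq_bigr do rewrite /= -mulr_suml; exact: sum_mul_delta.
Qed.

Lemma sum_pair_delta2 (R : pzRingType) (I J : finType) (h : I * J -> R) b :
  \sum_q h q * (b == q.2)%:R = \sum_i h (i, b).
Proof. by rewrite sum_pair; apply: eq_bigr => i _ /=; rewrite sum_mul_delta. Qed.

Lemma sum_triple_delta (R : pzRingType) (I J K : finType) (h : I * J * K -> R) a b :
  \sum_q h q * ((a, b) == (q.1.1, q.2))%:R = \sum_j h (a, j, b).
Proof.
rewrite sum_pair.
under eq_bigr => p _.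
  under eq_bigr => k _ do rewrite /= xpair_eqE -mulnb natrM mulrA.
  rewrite sum_mul_delta.
  over.
by rewrite /= (sum_pair_delta1 (fun p => h (p, b))).
Qed.

Lemma discrete_poincare_anchored (R : realFieldType) (I : finType) (e : rel I)
    (W : I -> I -> R) (D : I -> R) i0 :
  (forall a b, 0 <= W a b) -> (forall a b, e a b -> 0 < W a b) ->
  (forall a, 0 <= D a) -> 0 < D i0 -> (forall i, connect e i0 i) ->
  forall i, exists P, 0 < P /\ forall y : I -> R,
    y i ^+ 2 <= P * (\sum_a \sum_b W a b * (y b - y a) ^+ 2 + \sum_a D a * y a ^+ 2).
Proof.
move=> W0 We D0 Di0 conn i.
have [P [P0 HP]] := discrete_poincare W0 We (conn i).
exists (2 * P + 2 / D i0); split; first by rewrite addr_gt0 ?mulr_gt0 ?invr_gt0.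
move=> y; set Qe := \sum_a _; set Qd := \sum_a _.
have Qe0 : 0 <= Qe.
  by apply: sumr_ge0 => a _; apply: sumr_ge0 => b _; rewrite mulr_ge0 ?sqr_ge0.
have Qd0 : 0 <= Qd by apply: sumr_ge0 => a _; rewrite mulr_ge0 ?sqr_ge0.
have h1 : (y i - y i0) ^+ 2 <= P * Qe := HP y.
have h2 : D i0 * y i0 ^+ 2 <= Qd.
  by apply: (@ler_sum_term _ _ (fun a => D a * y a ^+ 2)) => a; rewrite mulr_ge0 ?sqr_ge0.
have h3 : y i0 ^+ 2 <= 1 / D i0 * Qd by rewrite mul1r ler_pdivlMl.
have h4 := sqrD_le (y i - y i0) (y i0); rewrite subrK in h4.
have h5 : P * Qe <= P * (Qe + Qd) by apply: ler_wpM2l; [exact: ltW | lra].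
have h6 : 1 / D i0 * Qd <= 1 / D i0 * (Qe + Qd).
  by apply: ler_wpM2l; [rewrite divr_ge0 // ltW | lra].
have -> : (2 * P + 2 / D i0) * (Qe + Qd) = 2 * (P * (Qe + Qd)) + 2 * (1 / D i0 * (Qe + Qd)).
  by field; rewrite gt_eqF.
lra.
Qed.

(* A linear form with zero-sum coefficients is controlled by the Dirichlet
   energy of a connected graph, since it only sees differences [y i - y i0]. *)
Lemma dirichlet_energy_absorbs_mean_zero (R : realFieldType) (I : finType) (e : rel I)
    (W : I -> I -> R) (b : I -> R) (i0 : I) :
  (forall a b, 0 <= W a b) -> (forall a b, e a b -> 0 < W a b) ->
  (forall i, connect e i0 i) -> \sum_i b i = 0 ->
  exists C, forall y : I -> R,
    - C <= \sum_i b i * y i + \sum_a \sum_b W a b * (y b - y a) ^+ 2.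
Proof.
move=> W0 We conn b0.
have /fin_all_exists [P HP] i := discrete_poincare W0 We (conn i).
have [C HC] := young_absorb b (fun i => (HP i).1).
exists C => y; set Q := \sum_a \sum_b _.
have Q0 : 0 <= Q.
  by apply: sumr_ge0 => a _; apply: sumr_ge0 => c _; rewrite mulr_ge0 ?sqr_ge0.
have H1 := HC (fun i => y i - y i0) Q Q0 (fun i => (HP i).2 y).
have H2 : \sum_i b i * (y i - y i0) = \sum_i b i * y i.
  under eq_bigr do rewrite mulrBr.
  by rewrite sumrB -mulr_suml b0 mul0r subr0.
have H3 : `|\sum_i b i * (y i - y i0)| <= \sum_i `|b i * (y i - y i0)|.
  exact: ler_norm_sum.
have := ler_norm (- \sum_i b i * (y i - y i0)); rewrite normrN.
rewrite H2 in H3 *; lra.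
Qed.

(* Young's inequality lets the quadratic form absorb the linear term. *)
Lemma coercive_quad_lin (R : realFieldType) (I : finType) (b P : I -> R) :
  (forall i, 0 < P i) ->
  exists K, forall (y : I -> R) (Q : R), 0 <= Q -> (forall i, y i ^+ 2 <= P i * Q) ->
    forall i, y i ^+ 2 / (2 * P i) - K <= Q + \sum_j b j * y j.
Proof.
move=> P0; have P2 i : 0 < 2 * P i by rewrite mulr_gt0.
have [C HC] := young_absorb b P2.
exists C => y Q Q0 yQ i.
have H1 : \sum_j `|b j * y j| <= Q / 2 + C.
  apply: HC; first by rewrite divr_ge0.
  by move=> j; have -> : 2 * P j * (Q / 2) = P j * Q by field.
have : `|\sum_j b j * y j| <= \sum_j `|b j * y j| by exact: ler_norm_sum.
have := ler_norm (- \sum_j b j * y j); rewrite normrN.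
have : y i ^+ 2 / (2 * P i) <= Q / 2.
  rewrite ler_pdivrMr //.
  by have -> : Q / 2 * (2 * P i) = P i * Q by field.
lra.
Qed.

Lemma psumr2_eq0P (R : realFieldType) (I J : finType) (F : I -> J -> R) :
  (forall i j, 0 <= F i j) -> \sum_i \sum_j F i j = 0 -> forall i j, F i j = 0.
Proof.
move=> F0 S0 i j; have Fi0 i' : 0 <= \sum_j F i' j by exact: sumr_ge0.
have Si := psumr_eq0P (fun i' _ => Fi0 i') S0 (isT : xpredT i).
exact: (@psumr_eq0P _ _ xpredT (F i) (fun j' _ => F0 i j') Si j isT).
Qed.

(** * Mesh weights *)

Section Mesh.
Variables (R : realType) (N : nat) (T : mesh R N).
Hypothesis Hok : mesh_ok T.

Definition tauw (i j : 'I_N) : R := if adj T i j then tau T i j else 0.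
Definition dir_weight i : R := \sum_(s <- dirF T i) s.1.1 / s.1.2.
Definition dir_value i : R := \sum_(s <- dirF T i) s.1.1 / s.1.2 * s.2.
Definition neu_flux i : R := \sum_(s <- neuF T i) s.1 * s.2.

Lemma vol_gt0 i : 0 < vol T i.
Proof. by case: Hok. Qed.

Lemma vol_neq0 i : vol T i != 0.
Proof. by rewrite gt_eqF ?vol_gt0. Qed.

Lemma fm_sym i j : fm T i j = fm T j i.
Proof. by case: Hok => _ [/(_ i j) []]. Qed.

Lemma fd_sym i j : fd T i j = fd T j i.
Proof. by case: Hok => _ [/(_ i j) []]. Qed.

Lemma fm_ge0 i j : 0 <= fm T i j.
Proof. by case: Hok => _ [_ []]. Qed.

Lemma fd_gt0 i j : adj T i j -> 0 < fd T i j.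
Proof. by case: Hok => _ [_ [_ [_ []]]] => /(_ i j). Qed.

Lemma dirF_gt0 i s : s \in dirF T i -> 0 < s.1.1 /\ 0 < s.1.2.
Proof. by case: Hok => _ [_ [_ [_ [_ []]]]] => /(_ i s). Qed.

Lemma adj_sym i j : adj T i j = adj T j i.
Proof. by rewrite /adj fm_sym. Qed.

Lemma harm_sym (u : 'I_N -> R) i j : harm T u i j = harm T u j i.
Proof. by rewrite /harm [vol T j * _ + _]addrC; congr (_ / _); ring. Qed.

Lemma harm_gt0 (u : 'I_N -> R) i j : (forall k, 0 < u k) -> 0 < harm T u i j.
Proof.
move=> u0; have v0 := vol_gt0.
by rewrite /harm divr_gt0 ?addr_gt0 ?mulr_gt0 ?addr_gt0.
Qed.

Lemma tauw_sym i j : tauw i j = tauw j i.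
Proof. by rewrite /tauw /tau adj_sym fm_sym fd_sym. Qed.

Lemma tauw_gt0 i j : adj T i j -> 0 < tauw i j.
Proof. by move=> ij; rewrite /tauw /tau ij divr_gt0 ?fd_gt0. Qed.

Lemma tauw_ge0 i j : 0 <= tauw i j.
Proof.
by rewrite /tauw; case: ifP => ij //; rewrite /tau divr_ge0 ?fm_ge0 // ltW ?fd_gt0.
Qed.

Lemma sum_adj_tauw (X : 'I_N -> R) i :
  \sum_(j | adj T i j) tau T i j * Dd X i j = \sum_j tauw i j * (X j - X i).
Proof.
rewrite big_mkcond /=; apply: eq_bigr => j _.
by rewrite /tauw /Dd; case: (adj T i j); rewrite ?mul0r.
Qed.

Lemma dir_weight_ge0 i : 0 <= dir_weight i.
Proof.
rewrite /dir_weight big_seq; apply: sumr_ge0 => s /dirF_gt0 [s1 s2].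
by rewrite divr_ge0 // ltW.
Qed.

Lemma dir_weight_gt0 i : dirF T i != [::] -> 0 < dir_weight i.
Proof.
rewrite /dir_weight; case E: (dirF T i) => [|s l] // _.
have [s1 s2] : 0 < s.1.1 /\ 0 < s.1.2 by apply: (@dirF_gt0 i); rewrite E mem_head.
rewrite big_cons ltr_pwDl ?divr_gt0 // big_seq sumr_ge0 // => t tl.
have [t1 t2] : 0 < t.1.1 /\ 0 < t.1.2 by apply: (@dirF_gt0 i); rewrite E in_cons tl orbT.
by rewrite divr_ge0 // ltW.
Qed.

End Mesh.

(** * The discrete heat operator *)

Section Heat.
Variables (R : realType) (N : nat) (T : mesh R N) (k : R).
Hypothesis Hok : mesh_ok T.
Hypothesis Hk : 0 < k.

Definition heat_op (dd X : 'I_N -> R) i : R :=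
  dd i * X i - k / vol T i * \sum_j tauw T i j * (X j - X i).

Lemma heat_op_le_at_min dd (X : 'I_N -> R) i0 :
  (forall j, X i0 <= X j) -> heat_op dd X i0 <= dd i0 * X i0.
Proof.
move=> Xmin; rewrite /heat_op gerBl mulr_ge0 //.
  by rewrite divr_ge0 // ltW // vol_gt0.
by apply: sumr_ge0 => j _; rewrite mulr_ge0 ?tauw_ge0 // subr_ge0.
Qed.

Lemma heat_op_min_principle dd (X : 'I_N -> R) : (forall i, 0 < dd i) ->
  (forall i, 0 <= heat_op dd X i) -> forall i, 0 <= X i.
Proof.
move=> dd0 LX0 i; have [i0 _ Xmin] := @arg_minP _ _ _ i xpredT X isT.
have := le_trans (LX0 i0) (heat_op_le_at_min dd (fun j => Xmin j isT)).
by rewrite (pmulr_rge0 _ (dd0 i0)) => /le_trans; apply; exact: Xmin.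
Qed.

Lemma heat_op_strict_min_principle dd (X : 'I_N -> R) : (forall i, 0 < dd i) ->
  (forall i, 0 < heat_op dd X i) -> forall i, 0 < X i.
Proof.
move=> dd0 LX0 i; have [i0 _ Xmin] := @arg_minP _ _ _ i xpredT X isT.
have := lt_le_trans (LX0 i0) (heat_op_le_at_min dd (fun j => Xmin j isT)).
by rewrite (pmulr_rgt0 _ (dd0 i0)) => /lt_le_trans; apply; exact: Xmin.
Qed.

Lemma heat_opB dd (X Y : 'I_N -> R) i :
  heat_op dd (fun j => X j - Y j) i = heat_op dd X i - heat_op dd Y i.
Proof.
rewrite /heat_op.
have -> : \sum_j tauw T i j * (X j - Y j - (X i - Y i))
    = \sum_j tauw T i j * (X j - X i) - \sum_j tauw T i j * (Y j - Y i).
  by rewrite -sumrB; apply: eq_bigr => j _; ring.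
ring.
Qed.

Lemma heat_op_inj dd (X Y : 'I_N -> R) : (forall i, 0 < dd i) ->
  (forall i, heat_op dd X i = heat_op dd Y i) -> X = Y.
Proof.
move=> dd0 XY; apply: funext => i.
have XY0 (U V : 'I_N -> R) : (forall i, heat_op dd U i = heat_op dd V i) ->
    0 <= U i - V i.
  move=> UV; apply: (@heat_op_min_principle dd (fun j => U j - V j) dd0) => j.
  by rewrite heat_opB UV subrr.
have := XY0 _ _ XY; have := XY0 Y X (fun j => esym (XY j)); lra.
Qed.

Definition heat_mx (dd : 'I_N -> R) : 'M[R]_N := \matrix_(i, j)
  ((i == j)%:R * (dd i + k / vol T i * \sum_j' tauw T i j') - k / vol T i * tauw T i j).

Lemma heat_mxE dd (X : 'I_N -> R) i : (heat_mx dd *m \col_j X j) i 0 = heat_op dd X i.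
Proof.
rewrite !mxE /heat_op; under eq_bigr do rewrite !mxE mulrBl.
rewrite sumrB; set D := dd i + k / vol T i * \sum_j' tauw T i j'.
have -> : \sum_j (i == j)%:R * D * X j = D * X i.
  rewrite (bigD1 i) //= eqxx mul1r big1 ?addr0 // => j ji.
  by rewrite eq_sym (negbTE ji) !mul0r.
have -> : \sum_j tauw T i j * (X j - X i)
    = \sum_j tauw T i j * X j - (\sum_j tauw T i j) * X i.
  by rewrite mulr_suml -sumrB; apply: eq_bigr => j _; ring.
have -> : \sum_j k / vol T i * tauw T i j * X j = k / vol T i * \sum_j tauw T i j * X j.
  by rewrite mulr_sumr; apply: eq_bigr => j _; ring.
rewrite /D; ring.
Qed.

Lemma heat_mx_unit dd : (forall i, 0 < dd i) -> heat_mx dd \in unitmx.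
Proof.
move=> dd0; rewrite unitmxE unitfE -det_tr; apply/negP => /det0P [v v0 vA].
have Av : heat_mx dd *m v^T = 0 by rewrite -(trmxK (heat_mx dd)) -trmx_mul vA trmx0.
have vE : \col_j v 0 j = v^T by apply/matrixP => a b; rewrite !mxE ord1.
have v_heat i : heat_op dd (fun j => v 0 j) i = heat_op dd (fun=> 0) i.
  rewrite -heat_mxE vE Av mxE /heat_op big1 => [|j _]; last by rewrite subrr mulr0.
  by rewrite !mulr0 subr0.
move/negP: v0; apply; apply/eqP/matrixP => a b; rewrite ord1 mxE.
by have := congr1 (fun f => f b) (heat_op_inj dd0 v_heat).
Qed.

Lemma heat_op_surj dd (r : 'I_N -> R) : (forall i, 0 < dd i) ->
  exists X, forall i, heat_op dd X i = r i.
Proof.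
move=> dd0; set Xm := invmx (heat_mx dd) *m \col_j r j.
exists (fun i => Xm i 0) => i; rewrite -heat_mxE.
have -> : \col_j Xm j 0 = Xm by apply/matrixP => a b; rewrite !mxE ord1.
by rewrite /Xm mulKVmx ?heat_mx_unit // mxE.
Qed.

Lemma heat_op_exists_unique_pos dd (r : 'I_N -> R) :
  (forall i, 0 < dd i) -> (forall i, 0 < r i) ->
  (exists! X, forall i, heat_op dd X i = r i) /\
  (forall X, (forall i, heat_op dd X i = r i) -> forall i, 0 < X i).
Proof.
move=> dd0 r0; have [X HX] := heat_op_surj r dd0.
split; first by exists X; split => // Y HY; apply: heat_op_inj dd0 _ => i; rewrite HX HY.
by move=> Y HY; apply: heat_op_strict_min_principle dd0 _ => i; rewrite HY.
Qed.

End Heat.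

(** * Concentrations and electric potential *)

Section Concentration.
Variables (R : realType) (N M : nat) (T : mesh R N) (eps dt : R) (nu z : 'I_M -> R)
  (rhof : 'I_N -> R) (cn : 'I_M -> 'I_N -> R) (Tn : 'I_N -> R).
Hypothesis Hok : mesh_ok T.
Hypothesis Hdt : 0 < dt.
Hypothesis Heps : 0 < eps.
Hypothesis Hnu : forall l, 0 < nu l.
Hypothesis Hcn : forall l i, 0 < cn l i.
Hypothesis Hconn : mesh_connected T.
Hypothesis Hdirf : has_dirichlet_face T.

Let dt_neq0 : dt != 0. Proof. by rewrite gt_eqF. Qed.

Definition chem_w l i j : R :=
  if adj T i j then fm T i j / (nu l * fd T i j) * harm T (cn l) i j else 0.
Definition therm_w l i j : R := if adj T i j then fm T i j / (nu l * fd T i j) else 0.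
Definition therm_src l i : R :=
  \sum_j therm_w l i j * (cn l j * (Tn j - 1) - cn l i * (Tn i - 1)).

(* Equations (i) and (ii), multiplied by [m(V_i)] (and (ii) moved to one side). *)
Definition species_res (c : 'I_M -> 'I_N -> R) (psi : 'I_N -> R) l i : R :=
  vol T i * (c l i - cn l i) / dt
  - eps * \sum_j chem_w l i j * ((ln (c l j) + z l * psi j) - (ln (c l i) + z l * psi i))
  - eps * therm_src l i.

Definition poisson_res (c : 'I_M -> 'I_N -> R) (psi : 'I_N -> R) i : R :=
  - eps ^+ 2 * (\sum_j tauw T i j * (psi j - psi i) + dir_value T i
                - dir_weight T i * psi i)
  - neu_flux T i - vol T i * (\sum_(l < M) z l * c l i + rhof i).

Lemma sum_flux c psi l i :
  \sum_(j | adj T i j) fm T i j * flux T (nu l) (z l) (cn l) (c l) psi Tn i j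
  = - \sum_j chem_w l i j * ((ln (c l j) + z l * psi j) - (ln (c l i) + z l * psi i))
    - therm_src l i.
Proof.
rewrite big_mkcond /= /therm_src -sumrN -sumrB; apply: eq_bigr => j _.
rewrite /chem_w /therm_w /flux /Dd; case: (adj T i j) => /=; last first.
  by rewrite !mul0r subr0 oppr0.
ring.
Qed.

Lemma eq_iE c psi :
  eq_i T eps dt nu z cn c psi Tn <-> forall l i, species_res c psi l i = 0.
Proof.
have E l i : (c l i - cn l i) / dt + eps / vol T i *
    (\sum_(j | adj T i j) fm T i j * flux T (nu l) (z l) (cn l) (c l) psi Tn i j)
    = species_res c psi l i / vol T i.
  by rewrite sum_flux /species_res; field; rewrite vol_neq0.
split => H l i; last by rewrite E H mul0r.
by have /eqP := H l i; rewrite E mulf_eq0 invr_eq0 (negbTE (vol_neq0 Hok i)) orbF => /eqP.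
Qed.

Lemma eq_iiE c psi :
  eq_ii T eps z rhof c psi <-> forall i, poisson_res c psi i = 0.
Proof.
have E i : \sum_(s <- dirF T i) s.1.1 / s.1.2 * (s.2 - psi i)
    = dir_value T i - dir_weight T i * psi i.
  by rewrite /dir_value /dir_weight mulr_suml -sumrB; apply: eq_bigr => s _; ring.
have E2 i :
  (- (eps ^+ 2 / vol T i) *
      ((\sum_(j | adj T i j) tau T i j * Dd psi i j)
       + \sum_(s <- dirF T i) (s.1.1 / s.1.2) * (s.2 - psi i))
    - 1 / vol T i * (\sum_(s <- neuF T i) s.1 * s.2))
    - (\sum_(l < M) z l * c l i + rhof i) = poisson_res c psi i / vol T i.
  rewrite E sum_adj_tauw -/(neu_flux T i) /poisson_res.
  by field; rewrite vol_neq0.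
split => H i; last by apply/eqP; rewrite -subr_eq0 E2 H mul0r.
have /eqP := H i; rewrite -subr_eq0 E2 mulf_eq0 invr_eq0.
by rewrite (negbTE (vol_neq0 Hok i)) orbF => /eqP.
Qed.

Lemma chem_w_sym l i j : chem_w l i j = chem_w l j i.
Proof. by rewrite /chem_w adj_sym // fm_sym // fd_sym // harm_sym. Qed.

Lemma therm_w_sym l i j : therm_w l i j = therm_w l j i.
Proof. by rewrite /therm_w adj_sym // fm_sym // fd_sym. Qed.

Lemma chem_w_gt0 l i j : adj T i j -> 0 < chem_w l i j.
Proof.
by move=> ij; rewrite /chem_w ij mulr_gt0 ?harm_gt0 // divr_gt0 ?mulr_gt0 ?fd_gt0.
Qed.

Lemma chem_w_ge0 l i j : 0 <= chem_w l i j.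
Proof. by case ij: (adj T i j); [exact: ltW (chem_w_gt0 l ij) | rewrite /chem_w ij]. Qed.

Lemma sum_therm_src l : \sum_i therm_src l i = 0.
Proof. by apply: sum_antisym => i j; exact: therm_w_sym. Qed.

(* The unknowns are the electrochemical potentials [mu_(l,i) = ln c_(l,i) +
   z_l psi_i] and the electric potentials [psi_i], stored in one row vector. *)
Definition unknown := ('I_M * 'I_N + 'I_N)%type.
Definition nvar := #|{: unknown}|.
Definition vidx (v : unknown) : 'I_nvar := enum_rank v.
Definition vcoord (v : unknown) (k : 'I_nvar) : R := (k == vidx v)%:R.

Definition chem_pot (x : 'rV[R]_nvar) l i := x ord0 (vidx (inl (l, i))).
Definition elec_pot (x : 'rV[R]_nvar) i := x ord0 (vidx (inr i)).
Definition conc_of (x : 'rV[R]_nvar) l i := expR (chem_pot x l i - z l * elec_pot x i).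

(* The energy is a sum of terms [expquad A B C] evaluated on linear forms:
   the entropy [(l, i)], the linear part in [mu_(l,i)], the diffusion of
   [mu_l] across [(i, j)], the diffusion of [psi] across [(i, j)] and the
   Dirichlet and linear part in [psi_i]. *)
Definition eterm :=
  (('I_M * 'I_N + 'I_M * 'I_N) + ('I_M * 'I_N * 'I_N + ('I_N * 'I_N + 'I_N)))%type.

Definition tform (p : eterm) : 'I_nvar -> R :=
  match p with
  | inl (inl q) => fun k => vcoord (inl q) k - z q.1 * vcoord (inr q.2) k
  | inl (inr q) => vcoord (inl q)
  | inr (inl q) => fun k => vcoord (inl (q.1.1, q.2)) k - vcoord (inl q.1) k
  | inr (inr (inl q)) => fun k => vcoord (inr q.2) k - vcoord (inr q.1) k
  | inr (inr (inr i)) => vcoord (inr i)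
  end.

Definition texp (p : eterm) : R :=
  match p with inl (inl q) => vol T q.2 / dt | _ => 0 end.

Definition tquad (p : eterm) : R :=
  match p with
  | inr (inl q) => eps / 4 * chem_w q.1.1 q.1.2 q.2
  | inr (inr (inl q)) => eps ^+ 2 / (4 * dt) * tauw T q.1 q.2
  | inr (inr (inr i)) => eps ^+ 2 / dt * dir_weight T i / 2
  | _ => 0 end.

Definition tlin (p : eterm) : R :=
  match p with
  | inl (inr q) => - (vol T q.2 * cn q.1 q.2 / dt + eps * therm_src q.1 q.2)
  | inr (inr (inr i)) =>
      - (eps ^+ 2 / dt * dir_value T i + (neu_flux T i + vol T i * rhof i) / dt)
  | _ => 0 end.

Definition energy := ridge_sum (fun p => expquad (texp p) (tquad p) (tlin p)) tform.

Definition energy_grad x k :=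
  \sum_p dexpquad (texp p) (tquad p) (tlin p) (lform (tform p) x) * tform p k.

Lemma vcoord_vidx v w : vcoord v (vidx w) = (w == v)%:R.
Proof. by rewrite /vcoord /vidx (inj_eq enum_rank_inj). Qed.

Lemma lform_vcoord v x : lform (vcoord v) x = x ord0 (vidx v).
Proof.
rewrite /lform (bigD1 (vidx v)) //= /vcoord eqxx mul1r big1 ?addr0 // => k /negbTE ->.
by rewrite mul0r.
Qed.

Lemma lformB (a b : 'I_nvar -> R) x : lform (fun k => a k - b k) x = lform a x - lform b x.
Proof. by rewrite /lform -sumrB; apply: eq_bigr => k _; rewrite mulrBl. Qed.

Lemma lformBZ (a b : 'I_nvar -> R) s x :
  lform (fun k => a k - s * b k) x = lform a x - s * lform b x.
Proof.
by rewrite /lform mulr_sumr -sumrB; apply: eq_bigr => k _; rewrite mulrBl mulrA.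
Qed.

Lemma energy_grad_split x k : energy_grad x k =
    \sum_q dexpquad (texp (inl (inl q))) 0 0 (lform (tform (inl (inl q))) x)
           * tform (inl (inl q)) k
  + \sum_q tlin (inl (inr q)) * tform (inl (inr q)) k
  + \sum_q (2 * tquad (inr (inl q)) * lform (tform (inr (inl q))) x) * tform (inr (inl q)) k
  + \sum_q (2 * tquad (inr (inr (inl q))) * lform (tform (inr (inr (inl q)))) x)
       * tform (inr (inr (inl q))) k
  + \sum_i (2 * tquad (inr (inr (inr i))) * lform (tform (inr (inr (inr i)))) x
              + tlin (inr (inr (inr i)))) * tform (inr (inr (inr i))) k.
Proof.
rewrite /energy_grad !big_sumType /= !addrA.
by congr (_ + _ + _ + _ + _); apply: eq_bigr => q _;
  rewrite /dexpquad /= ?(mul0r, mulr0, add0r, addr0).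
Qed.

Lemma energy_grad_chem x l0 i0 : energy_grad x (vidx (inl (l0, i0))) =
  vol T i0 / dt * expR (chem_pot x l0 i0 - z l0 * elec_pot x i0)
  - (vol T i0 * cn l0 i0 / dt + eps * therm_src l0 i0)
  - eps * \sum_j chem_w l0 i0 j * (chem_pot x l0 j - chem_pot x l0 i0).
Proof.
rewrite energy_grad_split /=.
under eq_bigr do rewrite !vcoord_vidx /= mulr0n mulr0 subr0.
rewrite sum_mul_delta /dexpquad lformBZ !lform_vcoord -/(chem_pot x l0 i0).
rewrite -/(elec_pot x i0).
under eq_bigr do rewrite !vcoord_vidx /=.
rewrite sum_mul_delta.
under eq_bigr do rewrite !vcoord_vidx /= mulrBr.
rewrite sumrB sum_triple_delta sum_pair_delta1.
under eq_bigr do rewrite !vcoord_vidx /= mulr0n subr0 mulr0.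
rewrite big1_eq.
under eq_bigr do rewrite !vcoord_vidx /= mulr0n mulr0.
rewrite big1_eq /= ?(mulr0, addr0, mul0r, add0r); congr (_ + _).
rewrite -sumrB mulr_sumr -sumrN; apply: eq_bigr => j _.
by rewrite !lformB !lform_vcoord (chem_w_sym l0 j i0) /chem_pot; field.
Qed.

Lemma energy_grad_elec x i0 : energy_grad x (vidx (inr i0)) =
  - \sum_l z l * (vol T i0 / dt * conc_of x l i0)
  - eps ^+ 2 / dt * \sum_j tauw T i0 j * (elec_pot x j - elec_pot x i0)
  + eps ^+ 2 / dt * dir_weight T i0 * elec_pot x i0
  - (eps ^+ 2 / dt * dir_value T i0 + (neu_flux T i0 + vol T i0 * rhof i0) / dt).
Proof.
rewrite energy_grad_split /=.
under eq_bigr do rewrite !vcoord_vidx /= mulr0n sub0r mulrN mulrA.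
rewrite sumrN sum_pair_delta2.
under eq_bigr do rewrite !vcoord_vidx /= mulr0n mulr0.
rewrite big1_eq.
under eq_bigr do rewrite !vcoord_vidx /= mulr0n subr0 mulr0.
rewrite big1_eq.
under eq_bigr do rewrite !vcoord_vidx /= mulrBr.
rewrite sumrB sum_pair_delta1 sum_pair_delta2.
under eq_bigr do rewrite !vcoord_vidx /=.
rewrite sum_mul_delta /= ?(mulr0, addr0, mul0r, add0r) !lform_vcoord -/(elec_pot x i0).
have -> : \sum_(l < M) dexpquad (vol T i0 / dt) 0 0
       (lform (fun k => vcoord (inl (l, i0)) k - z l * vcoord (inr i0) k) x) * z l
   = \sum_l z l * (vol T i0 / dt * conc_of x l i0).
  by apply: eq_bigr => l _; rewrite /dexpquad lformBZ !lform_vcoord /conc_of; ring.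
have -> : \sum_(i < N) 2 * (eps ^+ 2 / (4 * dt) * tauw T i i0) *
      lform (fun k => vcoord (inr i0) k - vcoord (inr i) k) x -
   \sum_(j < N) 2 * (eps ^+ 2 / (4 * dt) * tauw T i0 j) *
      lform (fun k => vcoord (inr j) k - vcoord (inr i0) k) x
   = - (eps ^+ 2 / dt * \sum_j tauw T i0 j * (elec_pot x j - elec_pot x i0)).
  rewrite -sumrB mulr_sumr -sumrN; apply: eq_bigr => j _.
  by rewrite !lformB !lform_vcoord (tauw_sym Hok j i0) /elec_pot; field.
by field.
Qed.

Lemma residuals_of_critical x : (forall k, energy_grad x k = 0) ->
  (forall l i, species_res (conc_of x) (elec_pot x) l i = 0) /\
  (forall i, poisson_res (conc_of x) (elec_pot x) i = 0).
Proof.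
move=> crit; split => [l i|i].
  have := crit (vidx (inl (l, i))); rewrite energy_grad_chem => <-.
  rewrite /species_res /conc_of expRK.
  have -> : \sum_j chem_w l i j * (ln (expR (chem_pot x l j - z l * elec_pot x j))
      + z l * elec_pot x j - (chem_pot x l i - z l * elec_pot x i + z l * elec_pot x i))
      = \sum_j chem_w l i j * (chem_pot x l j - chem_pot x l i).
    by apply: eq_bigr => j _; rewrite expRK; congr (_ * _); ring.
  by field.
have := crit (vidx (inr i)); rewrite energy_grad_elec /poisson_res => H.
have E : \sum_l z l * (vol T i / dt * conc_of x l i)
    = vol T i / dt * \sum_l z l * conc_of x l i.
  by rewrite mulr_sumr; apply: eq_bigr => l _; ring.
move: H; rewrite E; set G := (X in X = 0) => G0.
by transitivity (dt * G); [rewrite /G; field | rewrite G0 mulr0].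
Qed.

Definition log_conc x l i := chem_pot x l i - z l * elec_pot x i.

Lemma energyE x : energy x =
    \sum_(q : 'I_M * 'I_N) vol T q.2 / dt * expR (log_conc x q.1 q.2)
  + \sum_(q : 'I_M * 'I_N) tlin (inl (inr q)) * chem_pot x q.1 q.2
  + (\sum_(q : 'I_M * 'I_N * 'I_N) eps / 4 * chem_w q.1.1 q.1.2 q.2 *
       (chem_pot x q.1.1 q.2 - chem_pot x q.1.1 q.1.2) ^+ 2
  + (\sum_(q : 'I_N * 'I_N) eps ^+ 2 / (4 * dt) * tauw T q.1 q.2 *
       (elec_pot x q.2 - elec_pot x q.1) ^+ 2
  + \sum_i (eps ^+ 2 / dt * dir_weight T i / 2 * elec_pot x i ^+ 2
            + tlin (inr (inr (inr i))) * elec_pot x i))).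
Proof.
rewrite /energy /ridge_sum !big_sumType /= /expquad.
by congr (_ + _ + (_ + (_ + _))); apply: eq_bigr => q _;
  rewrite ?lformBZ ?lformB !lform_vcoord /log_conc /chem_pot /elec_pot;
  rewrite -?surjective_pairing; ring.
Qed.

Definition entropy_part x : R := \sum_(q : 'I_M * 'I_N) vol T q.2 / dt *
   (expR (log_conc x q.1 q.2) - cn q.1 q.2 * log_conc x q.1 q.2).

Definition chem_part x : R :=
    \sum_(q : 'I_M * 'I_N) - (eps * therm_src q.1 q.2) * chem_pot x q.1 q.2
  + \sum_(q : 'I_M * 'I_N * 'I_N) eps / 4 * chem_w q.1.1 q.1.2 q.2 *
      (chem_pot x q.1.1 q.2 - chem_pot x q.1.1 q.1.2) ^+ 2.

Definition elec_quad x : R :=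
    \sum_(q : 'I_N * 'I_N) eps ^+ 2 / (4 * dt) * tauw T q.1 q.2 *
      (elec_pot x q.2 - elec_pot x q.1) ^+ 2
  + \sum_i eps ^+ 2 / dt * dir_weight T i / 2 * elec_pot x i ^+ 2.

Definition elec_lin i : R :=
  tlin (inr (inr (inr i))) - \sum_l vol T i * cn l i * z l / dt.

Definition elec_part x : R := elec_quad x + \sum_i elec_lin i * elec_pot x i.

(* The [- cn * z * psi] part of the entropy is moved into [elec_part]. *)
Lemma energy_split x : energy x = entropy_part x + chem_part x + elec_part x.
Proof.
set W := \sum_(q : 'I_M * 'I_N) vol T q.2 * cn q.1 q.2 / dt * chem_pot x q.1 q.2.
set Z := \sum_i (\sum_l vol T i * cn l i * z l / dt) * elec_pot x i.
have ZE : Z = \sum_(q : 'I_M * 'I_N) vol T q.2 * cn q.1 q.2 * z q.1 / dt * elec_pot x q.2.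
  rewrite /Z sum_pair exchange_big /=; apply: eq_bigr => i _.
  by rewrite mulr_suml.
have E1 : entropy_part x = \sum_(q : 'I_M * 'I_N) vol T q.2 / dt * expR (log_conc x q.1 q.2)
    - W + Z.
  rewrite /entropy_part /W ZE -sumrB -big_split /=.
  by apply: eq_bigr => q _; rewrite /log_conc; ring.
have E2 : \sum_(q : 'I_M * 'I_N) tlin (inl (inr q)) * chem_pot x q.1 q.2
    = - W + \sum_(q : 'I_M * 'I_N) - (eps * therm_src q.1 q.2) * chem_pot x q.1 q.2.
  by rewrite /W -sumrN -big_split /=; apply: eq_bigr => q _; ring.
have E3 : \sum_i elec_lin i * elec_pot x i
    = \sum_i tlin (inr (inr (inr i))) * elec_pot x i - Z.
  by rewrite /Z -sumrB; apply: eq_bigr => i _; rewrite /elec_lin; ring.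
rewrite energyE E1 E2 /chem_part /elec_part E3 /elec_quad big_split /=; ring.
Qed.

Lemma chem_part_lb : exists K, forall x, - K <= chem_part x.
Proof.
have [i0 _] := Hdirf.
have src0 l : \sum_i - (eps * therm_src l i) = 0.
  by rewrite sumrN -mulr_sumr sum_therm_src mulr0 oppr0.
have W0 l a b : 0 <= eps / 4 * chem_w l a b.
  by rewrite mulr_ge0 ?chem_w_ge0 // divr_ge0 // ltW.
have W1 l a b : adj T a b -> 0 < eps / 4 * chem_w l a b.
  by move=> ab; rewrite mulr_gt0 ?chem_w_gt0 // divr_gt0.
have /fin_all_exists [C HC] l := dirichlet_energy_absorbs_mean_zero
  (W0 l) (W1 l) (Hconn i0) (src0 l).
exists (\sum_l C l) => x.
have -> : chem_part x = \sum_l (\sum_i - (eps * therm_src l i) * chem_pot x l i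
    + \sum_i \sum_j eps / 4 * chem_w l i j * (chem_pot x l j - chem_pot x l i) ^+ 2).
  by rewrite /chem_part big_split /= !sum_pair.
by rewrite -sumrN; apply: ler_sum => l _; exact: HC.
Qed.

Lemma elec_quad_ge0 x : 0 <= elec_quad x.
Proof.
have e0 : 0 <= eps ^+ 2 / dt by rewrite divr_ge0 ?sqr_ge0 // ltW.
rewrite /elec_quad addr_ge0 // sumr_ge0 // => [q|i] _.
  by rewrite mulr_ge0 ?sqr_ge0 // mulr_ge0 ?tauw_ge0 // divr_ge0 ?sqr_ge0 ?mulr_ge0 ?ltW.
by rewrite mulr_ge0 ?sqr_ge0 // divr_ge0 // mulr_ge0 ?dir_weight_ge0.
Qed.

Lemma elec_quad_poincare i : exists P, 0 < P /\
  forall x, elec_pot x i ^+ 2 <= P * elec_quad x.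
Proof.
have [i0 i0D] := Hdirf.
have e0 : 0 < eps ^+ 2 / dt by rewrite divr_gt0 ?exprn_gt0.
have W0 a b : 0 <= eps ^+ 2 / (4 * dt) * tauw T a b.
  by rewrite mulr_ge0 ?tauw_ge0 // divr_ge0 ?sqr_ge0 // mulr_ge0 // ltW.
have W1 a b : adj T a b -> 0 < eps ^+ 2 / (4 * dt) * tauw T a b.
  by move=> ab; rewrite mulr_gt0 ?tauw_gt0 // divr_gt0 ?exprn_gt0 // mulr_gt0.
have D0 a : 0 <= eps ^+ 2 / dt * dir_weight T a / 2.
  by rewrite divr_ge0 // mulr_ge0 ?dir_weight_ge0 // ltW.
have D1 : 0 < eps ^+ 2 / dt * dir_weight T i0 / 2.
  by rewrite divr_gt0 // mulr_gt0 ?dir_weight_gt0.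
have [P [P0 HP]] := discrete_poincare_anchored W0 W1 D0 D1 (Hconn i0) i.
by exists P; split => // x; rewrite /elec_quad sum_pair; exact: HP.
Qed.

Lemma elec_part_lb : exists K (P : 'I_N -> R), (forall i, 0 < P i) /\
  forall x i, elec_pot x i ^+ 2 / P i - K <= elec_part x.
Proof.
have /fin_all_exists [P HP] := elec_quad_poincare.
have [K HK] := coercive_quad_lin elec_lin (fun i => (HP i).1).
exists K, (fun i => 2 * P i); split => [i|x i]; first by rewrite mulr_gt0 // (HP i).1.
exact: HK (elec_quad_ge0 x) (fun j => (HP j).2 x) i.
Qed.

Definition entropy_const (q : 'I_M * 'I_N) : R :=
  vol T q.2 / dt * ((cn q.1 q.2 + 1) ^+ 2 / 2).

Definition entropy_rate (q : 'I_M * 'I_N) : R :=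
  vol T q.2 / dt * (cn q.1 q.2 / (cn q.1 q.2 + 1)).

Lemma entropy_rate_gt0 q : 0 < entropy_rate q.
Proof.
by rewrite /entropy_rate !mulr_gt0 ?invr_gt0 ?addr_gt0 ?vol_gt0.
Qed.

Lemma entropy_term_ge x q :
  entropy_rate q * `|log_conc x q.1 q.2| - entropy_const q
  <= vol T q.2 / dt * (expR (log_conc x q.1 q.2) - cn q.1 q.2 * log_conc x q.1 q.2).
Proof.
rewrite /entropy_rate /entropy_const -mulrA -mulrBr ler_wpM2l ?expR_subMl_ge //.
by rewrite divr_ge0 // ltW ?vol_gt0.
Qed.

Lemma entropy_const_ge0 q : 0 <= entropy_const q.
Proof. by rewrite mulr_ge0 ?divr_ge0 ?sqr_ge0 // ltW ?vol_gt0. Qed.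

Lemma entropy_term_ge_const x q :
  - entropy_const q
  <= vol T q.2 / dt * (expR (log_conc x q.1 q.2) - cn q.1 q.2 * log_conc x q.1 q.2).
Proof.
apply: le_trans (entropy_term_ge x q).
have := mulr_ge0 (ltW (entropy_rate_gt0 q)) (normr_ge0 (log_conc x q.1 q.2)).
lra.
Qed.

Lemma entropy_part_lb x : - \sum_q entropy_const q <= entropy_part x.
Proof. by rewrite -sumrN; apply: ler_sum => q _; exact: entropy_term_ge_const. Qed.

Lemma entropy_part_ge x q :
  entropy_rate q * `|log_conc x q.1 q.2| <= entropy_part x + 2 * \sum_q entropy_const q.
Proof.
have := ler_term_of_sum q (lexx (entropy_part x)) (entropy_term_ge_const x).
have -> : \sum_q `|- entropy_const q| = \sum_q entropy_const q.
  by apply: eq_bigr => q' _; rewrite normrN ger0_norm ?entropy_const_ge0.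
have := entropy_term_ge x q.
have := ler_sum_term q entropy_const_ge0.
lra.
Qed.

Lemma energy_coercive k : exists B, forall x, energy x <= energy 0 -> `|x ord0 k| <= B.
Proof.
have [K1 HK1] := chem_part_lb.
have [K2 [P [P0 HP]]] := elec_part_lb.
set K3 := \sum_q entropy_const q.
set S := energy 0 + K1 + K2 + 2 * K3.
have K30 : 0 <= K3 by apply: sumr_ge0 => q _; exact: entropy_const_ge0.
have elec_bound x i : energy x <= energy 0 -> `|elec_pot x i| <= 1 + P i * S.
  rewrite energy_split => h.
  have := HK1 x; have := HP x i; have := entropy_part_lb x; rewrite -/K3 => h1 h2 h3.
  have h4 : elec_pot x i ^+ 2 / P i <= S by rewrite /S; lra.
  have h5 : elec_pot x i ^+ 2 <= P i * S by rewrite -ler_pdivrMl // mulrC.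
  by have := normr_le1Dsqr (elec_pot x i); lra.
have log_bound x l i : energy x <= energy 0 ->
    `|log_conc x l i| <= S / entropy_rate (l, i).
  rewrite energy_split ler_pdivlMr ?entropy_rate_gt0 // => h.
  have := entropy_part_ge x (l, i); rewrite -/K3 mulrC.
  have := HK1 x; have := HP x i.
  have := divr_ge0 (sqr_ge0 (elec_pot x i)) (ltW (P0 i)).
  rewrite /S; lra.
have kE : k = vidx (enum_val k) by rewrite /vidx enum_valK.
case: (enum_val k) kE => [[l i]|i] ->; last by exists (1 + P i * S) => x; exact: elec_bound.
exists (S / entropy_rate (l, i) + `|z l| * (1 + P i * S)) => x h.
have -> : x ord0 (vidx (inl (l, i))) = log_conc x l i + z l * elec_pot x i.
  by rewrite /log_conc /chem_pot; ring.
apply: le_trans (ler_normD _ _) _; rewrite normrM.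
apply: lerD; first exact: log_bound.
by apply: ler_wpM2l; [exact: normr_ge0 | exact: elec_bound].
Qed.

Lemma conc_step_exists : exists cp : ('I_M -> 'I_N -> R) * ('I_N -> R),
  (forall l i, 0 < cp.1 l i) /\
  (forall l i, species_res cp.1 cp.2 l i = 0) /\ (forall i, poisson_res cp.1 cp.2 i = 0).
Proof.
have [x crit] := expquad_ridge_critical_point energy_coercive.
have [H1 H2] := residuals_of_critical crit.
by exists (conc_of x, elec_pot x); split => // l i; exact: expR_gt0.
Qed.

Section Uniqueness.
Variables (c c' : 'I_M -> 'I_N -> R) (psi psi' : 'I_N -> R).
Hypotheses (Hc : forall l i, 0 < c l i) (Hc' : forall l i, 0 < c' l i).
Hypotheses (Hs : forall l i, species_res c psi l i = 0)
  (Hs' : forall l i, species_res c' psi' l i = 0).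
Hypotheses (Hp : forall i, poisson_res c psi i = 0)
  (Hp' : forall i, poisson_res c' psi' i = 0).

Let dmu l i := (ln (c l i) + z l * psi i) - (ln (c' l i) + z l * psi' i).
Let dpsi i := psi i - psi' i.

Lemma species_res_sub l i :
  vol T i * (c l i - c' l i) = dt * eps * \sum_j chem_w l i j * (dmu l j - dmu l i).
Proof.
have := Hs l i; have := Hs' l i; rewrite /species_res.
set A' := \sum_j chem_w l i j * _; set A := \sum_j chem_w l i j * _ => h' h.
have -> : \sum_j chem_w l i j * (dmu l j - dmu l i) = A - A'.
  by rewrite /A /A' -sumrB; apply: eq_bigr => j _; rewrite /dmu; ring.
apply: (mulfI (invr_neq0 dt_neq0)); rewrite mulrA mulrC -[in RHS]mulrA.
by rewrite [RHS]mulrA mulVf // mul1r; lra.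
Qed.

Lemma species_dissipation l : \sum_i vol T i * (c l i - c' l i) * dmu l i <= 0.
Proof.
have -> : \sum_i vol T i * (c l i - c' l i) * dmu l i =
    dt * eps * \sum_i \sum_j chem_w l i j * (dmu l j - dmu l i) * dmu l i.
  rewrite mulr_sumr; apply: eq_bigr => i _; rewrite species_res_sub -mulrA mulr_suml.
  by congr (_ * _); apply: eq_bigr => j _.
rewrite (sum_sym_by_parts _ (chem_w_sym l)) pmulr_rle0 ?mulr_gt0 //.
rewrite mulNr oppr_le0 divr_ge0 //.
by apply: sumr_ge0 => a _; apply: sumr_ge0 => b _; rewrite mulr_ge0 ?chem_w_ge0 ?sqr_ge0.
Qed.

Lemma poisson_res_sub i : vol T i * \sum_l z l * (c l i - c' l i)
  = - eps ^+ 2 * (\sum_j tauw T i j * (dpsi j - dpsi i) - dir_weight T i * dpsi i).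
Proof.
have := Hp i; have := Hp' i; rewrite /poisson_res => h' h.
have -> : \sum_l z l * (c l i - c' l i) = \sum_l z l * c l i - \sum_l z l * c' l i.
  by rewrite -sumrB; apply: eq_bigr => l _; ring.
have -> : \sum_j tauw T i j * (dpsi j - dpsi i)
    = \sum_j tauw T i j * (psi j - psi i) - \sum_j tauw T i j * (psi' j - psi' i).
  by rewrite -sumrB; apply: eq_bigr => j _; rewrite /dpsi; ring.
rewrite /dpsi; lra.
Qed.

(* Testing the Poisson equations with [psi - psi'] and summing by parts. *)
Lemma poisson_energy_identity :
  \sum_l \sum_i vol T i * (c l i - c' l i) * (z l * dpsi i)
  = eps ^+ 2 / 2 * (\sum_i \sum_j tauw T i j * (dpsi j - dpsi i) ^+ 2)
    + eps ^+ 2 * \sum_i dir_weight T i * dpsi i ^+ 2.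
Proof.
rewrite exchange_big /=.
have E i : \sum_l vol T i * (c l i - c' l i) * (z l * dpsi i) =
    dpsi i * (vol T i * \sum_l z l * (c l i - c' l i)).
  by rewrite !mulr_sumr; apply: eq_bigr => l _; ring.
under eq_bigr do rewrite E poisson_res_sub.
have -> : \sum_i dpsi i * (- eps ^+ 2 * (\sum_j tauw T i j * (dpsi j - dpsi i)
      - dir_weight T i * dpsi i))
    = - eps ^+ 2 * (\sum_i \sum_j tauw T i j * (dpsi j - dpsi i) * dpsi i)
      + eps ^+ 2 * \sum_i dir_weight T i * dpsi i ^+ 2.
  rewrite !mulr_sumr -big_split /=; apply: eq_bigr => i _.
  by rewrite -mulr_suml; ring.
by rewrite (sum_sym_by_parts _ (tauw_sym Hok)); ring.
Qed.

Let entropy_gap := \sum_l \sum_i vol T i * ((c l i - c' l i) * (ln (c l i) - ln (c' l i))).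
Let flux_gap := \sum_i \sum_j tauw T i j * (dpsi j - dpsi i) ^+ 2.
Let dir_gap := \sum_i dir_weight T i * dpsi i ^+ 2.

Lemma entropy_gap_term_ge0 l i :
  0 <= vol T i * ((c l i - c' l i) * (ln (c l i) - ln (c' l i))).
Proof. by rewrite mulr_ge0 ?subr_ln_mul_ge0 // ltW ?vol_gt0. Qed.

Lemma gaps_eq0 : [/\ entropy_gap = 0, flux_gap = 0 & dir_gap = 0].
Proof.
have L0 : 0 <= entropy_gap.
  by apply: sumr_ge0 => l _; apply: sumr_ge0 => i _; exact: entropy_gap_term_ge0.
have Q0 : 0 <= flux_gap.
  by apply: sumr_ge0 => a _; apply: sumr_ge0 => b _; rewrite mulr_ge0 ?tauw_ge0 ?sqr_ge0.
have D0 : 0 <= dir_gap by apply: sumr_ge0 => i _; rewrite mulr_ge0 ?dir_weight_ge0 ?sqr_ge0.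
have tot : entropy_gap + (eps ^+ 2 / 2 * flux_gap + eps ^+ 2 * dir_gap) <= 0.
  rewrite -poisson_energy_identity /entropy_gap -big_split /=.
  apply: (le_trans (y := \sum_(l < M) (0 : R))); last by rewrite big1.
  apply: ler_sum => l _; rewrite -big_split /=.
  rewrite (eq_bigr (fun i => vol T i * (c l i - c' l i) * dmu l i)) ?species_dissipation //.
  by move=> i _; rewrite /dmu /dpsi; ring.
have e2 : 0 < eps ^+ 2 by rewrite exprn_gt0.
have e2' : 0 < eps ^+ 2 / 2 by rewrite divr_gt0.
have hQ := mulr_ge0 (ltW e2') Q0; have hD := mulr_ge0 (ltW e2) D0.
split; first lra.
- have /eqP : eps ^+ 2 / 2 * flux_gap = 0 by lra.
  by rewrite mulf_eq0 (gt_eqF e2') => /eqP.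
- have /eqP : eps ^+ 2 * dir_gap = 0 by lra.
  by rewrite mulf_eq0 (gt_eqF e2) => /eqP.
Qed.

Lemma conc_step_unique : c = c' /\ psi = psi'.
Proof.
have [L0 Q0 D0] := gaps_eq0.
split.
  apply: funext => l; apply: funext => i.
  have /eqP := psumr2_eq0P entropy_gap_term_ge0 L0 l i.
  rewrite mulf_eq0 (negbTE (vol_neq0 Hok i)) /= => /eqP.
  exact: subr_ln_mul_eq0.
have [i0 i0D] := Hdirf.
have dpsi0 : dpsi i0 = 0.
  have D := psumr_eq0P (fun i _ => mulr_ge0 (dir_weight_ge0 Hok i) (sqr_ge0 (dpsi i))) D0.
  have /eqP := D i0 isT.
  by rewrite mulf_eq0 (gt_eqF (dir_weight_gt0 Hok i0D)) sqrf_eq0 => /eqP.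
have edge a b : adj T a b -> dpsi b = dpsi a.
  move=> ab; have /eqP := psumr2_eq0P
    (fun i j => mulr_ge0 (tauw_ge0 Hok i j) (sqr_ge0 (dpsi j - dpsi i))) Q0 a b.
  by rewrite mulf_eq0 (gt_eqF (tauw_gt0 Hok ab)) sqrf_eq0 subr_eq0 => /eqP.
apply: funext => i; have := connect_eq_const edge (Hconn i0 i).
by move: dpsi0; unfold dpsi; lra.
Qed.

End Uniqueness.

Lemma conc_step_exists_unique :
  exists! cp : ('I_M -> 'I_N -> R) * ('I_N -> R),
    (forall l i, 0 < cp.1 l i) /\
    eq_i T eps dt nu z cn cp.1 cp.2 Tn /\ eq_ii T eps z rhof cp.1 cp.2.
Proof.
have [[c psi] /= [Hc [Hs Hp]]] := conc_step_exists.
exists (c, psi); split; first by split => //; split; [apply/eq_iE | apply/eq_iiE].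
move=> [c' psi'] /= [Hc' [/eq_iE Hs' /eq_iiE Hp']].
by have [-> ->] := conc_step_unique Hc Hc' Hs Hs' Hp Hp'.
Qed.

End Concentration.

(** * Temperature *)

Section TemperatureStep.
Variables (R : realType) (N M d : nat) (T : mesh R N) (eps dt k CT : R)
  (nu z : 'I_M -> R) (cn cnp : 'I_M -> 'I_N -> R) (psi Tn : 'I_N -> R)
  (lam : 'I_M -> 'I_N -> 'I_N -> R) (uh : 'I_M -> 'I_N -> 'rV[R]_d).
Hypotheses (Hok : mesh_ok T) (Hk : 0 < k) (Heps : 0 < eps) (HCT : 0 < CT) (Hdt : 0 < dt).
Hypotheses (Hnu : forall l, 0 < nu l) (Hcnp : forall l i, 0 < cnp l i).
Hypothesis HTn : forall i, 0 < Tn i.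

Let P i := Pn T eps dt nu z cn cnp psi Tn lam i.
Let heat_src i := CT * Tn i / dt + eps * \sum_(l < M) nu l * cnp l i * sqnorm (uh l i).

(* Equation (iii) divided by [dt]: the production term [T P] goes to the diagonal. *)
Lemma eq_iiiE (Tnp : 'I_N -> R) :
  eq_iii T eps dt k CT nu z cn cnp psi Tn lam uh Tnp <->
  forall i, heat_op T k (fun i => CT / dt - P i) Tnp i = heat_src i.
Proof.
have E i : CT * ((Tnp i - Tn i) / dt) - (k / vol T i *
      (\sum_(j | adj T i j) tau T i j * Dd Tnp i j) + Tnp i * P i
      + eps * \sum_(l < M) nu l * cnp l i * sqnorm (uh l i))
    = heat_op T k (fun i => CT / dt - P i) Tnp i - heat_src i.
  by rewrite sum_adj_tauw /heat_op /heat_src; ring.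
split => H i; apply/eqP; rewrite -subr_eq0; apply/eqP.
  by rewrite -E H subrr.
by rewrite E H subrr.
Qed.

Lemma heat_src_gt0 i : 0 < heat_src i.
Proof.
have S0 : 0 <= \sum_(l < M) nu l * cnp l i * sqnorm (uh l i).
  apply: sumr_ge0 => l _; apply: mulr_ge0; first by rewrite mulr_ge0 // ltW.
  by apply: sumr_ge0 => j _; exact: sqr_ge0.
have : 0 < CT * Tn i / dt by rewrite !mulr_gt0 ?invr_gt0.
have := mulr_ge0 (ltW Heps) S0; rewrite /heat_src; lra.
Qed.

Lemma heat_diag_gt0 :
  dt * \big[Num.max/0]_(i < N) `|P i| < CT -> forall i, 0 < CT / dt - P i.
Proof.
move=> Pmax i; rewrite subr_gt0 ltr_pdivlMr // mulrC.
apply: le_lt_trans Pmax; rewrite ler_pM2l //.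
by apply: le_trans (ler_norm _) _; exact: (le_bigmax 0 (fun i => `|P i|) i).
Qed.

Lemma temperature_step : dt * \big[Num.max/0]_(i < N) `|P i| < CT ->
  (exists! Tnp, eq_iii T eps dt k CT nu z cn cnp psi Tn lam uh Tnp) /\
  (forall Tnp, eq_iii T eps dt k CT nu z cn cnp psi Tn lam uh Tnp -> forall i, 0 < Tnp i).
Proof.
move=> Pmax.
have [[X [HX Xuniq]] Xpos] :=
  heat_op_exists_unique_pos Hok Hk (heat_diag_gt0 Pmax) heat_src_gt0.
split; first by exists X; split => [|Y /eq_iiiE HY]; [apply/eq_iiiE | exact: Xuniq].
by move=> Y /eq_iiiE; exact: Xpos.
Qed.

End TemperatureStep.

Theorem theorem3p2 (R : realType) (N M d : nat) (T : mesh R N)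
    (eps k CT dt : R) (nu z : 'I_M -> R) (rhof : 'I_N -> R)
    (cn : 'I_M -> 'I_N -> R) (Tn : 'I_N -> R)
    (lam : ('I_M -> 'I_N -> R) -> 'I_M -> 'I_N -> 'I_N -> R)
    (uhat : ('I_M -> 'I_N -> R) -> ('I_N -> R) -> ('I_N -> R) ->
            'I_M -> 'I_N -> 'rV[R]_d) :
  mesh_ok T -> mesh_connected T -> has_dirichlet_face T ->
  0 < eps -> 0 < k -> 0 < CT -> (forall l, 0 < nu l) ->
  (forall l i, 0 < cn l i) ->
  (* lambda^l_sigma depends only on sigma = i|j *)
  (forall c l i j, lam c l i j = lam c l j i) ->
  0 < dt ->
  (exists! cp : ('I_M -> 'I_N -> R) * ('I_N -> R),
      (forall l i, 0 < cp.1 l i) /\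
      eq_i T eps dt nu z cn cp.1 cp.2 Tn /\ eq_ii T eps z rhof cp.1 cp.2)
  /\
  (forall (cnp : 'I_M -> 'I_N -> R) (psi : 'I_N -> R),
      (forall l i, 0 < cnp l i) ->
      eq_i T eps dt nu z cn cnp psi Tn -> eq_ii T eps z rhof cnp psi ->
      (forall i, 0 < Tn i) ->
      dt * \big[Num.max/0]_(i < N) `|Pn T eps dt nu z cn cnp psi Tn (lam cnp) i| < CT ->
      (exists! Tnp : 'I_N -> R,
          eq_iii T eps dt k CT nu z cn cnp psi Tn (lam cnp) (uhat cnp psi Tn) Tnp)
      /\
      (forall Tnp : 'I_N -> R,
          eq_iii T eps dt k CT nu z cn cnp psi Tn (lam cnp) (uhat cnp psi Tn) Tnp ->
          forall i, 0 < Tnp i)).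
Proof.
move=> Hok Hconn Hdirf Heps Hk HCT Hnu Hcn _ Hdt; split.
  exact: conc_step_exists_unique.
move=> cnp psi Hcnp _ _ HTn.
exact: temperature_step.
Qed.
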